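(* For every integer $i\ge1$, $f(R_i)=i-1$.
   Context: Rooted binary trees $H_i$ are defined recursively: $H_1$ is a single vertex $r'_1$; for $i\ge2$, $H_i$ has root $r'_i$ with exactly two children: a leaf, and the root $r'_{i-1}$ of a copy of $H_{i-1}$. Rooted binary trees $R_i$ are defined recursively: $R_1$ is a single vertex $r_1$; for $i\ge2$, $R_i$ has root $r_i$ with exactly two children: the root $r_{i-1}$ of a copy of $R_{i-1}$ and the root $r'_{i-1}$ of a copy of $H_{i-1}$. For a rooted tree $T_r$, $h(T_r)$ is the number of vertices on a longest path in $T_r$ starting at $r$ ($h$ of a single vertex is $1$; the empty tree has $h=0$ and $f=0$), and $T_v$ is the subtree of descendants of $v$ rooted at $v$. The function $f$ is defined recursively: if $|V(T_r)|\le1$ then $f(T_r)=0$; otherwise let the children of $r$ be $v_1,\dots,v_k$ ordered so that $h(T_{v_1})\ge\dots\ge h(T_{v_k})$, appending an empty tree $T_{v_k}$ if needed so that $k$ is even; then $f(T_r)=\max\{\sum_{i=1}^k f(T_{v_i}),\ \sum_{i=1}^{k/2} h(T_{v_{2i}})\}$. *)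

From mathcomp Require Import all_boot.
Set Implicit Arguments. Unset Strict Implicit. Unset Printing Implicit Defensive.

Inductive tree : Type := Node of seq tree.

Definition children (t : tree) : seq tree := let: Node c := t in c.

(* h(T_r): number of vertices on a longest path starting at the root. *)
Fixpoint height (t : tree) : nat :=
  let: Node c := t in (foldr maxn 0 (map height c)).+1.

(* sum of the entries at positions 2,4,6,... (1-indexed) of s *)
Fixpoint sum_even_pos (s : seq nat) : nat :=
  match s with
  | _ :: y :: s' => y + sum_even_pos s'
  | _ => 0
  end.

(* The heights of the children sorted non-increasingly, padded with the
   height 0 of an empty tree when the number of children is odd. *)
Definition sorted_child_heights (c : seq tree) : seq nat :=
  let hs := sort geq (map height c) in
  if odd (size hs) then rcons hs 0 else hs.

(* f as in the paper; a tree with <= 1 vertex (no children) gets 0.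
   The padded empty tree contributes f = 0 to the first sum. *)
Fixpoint f (t : tree) : nat :=
  let: Node c := t in
  match c with
  | [::] => 0
  | _ => maxn (sumn (map f c)) (sum_even_pos (sorted_child_heights c))
  end.

Definition leaf : tree := Node [::].

Fixpoint H (i : nat) : tree :=
  match i with
  | 0 | 1 => leaf
  | i'.+1 => Node [:: leaf; H i']
  end.

Fixpoint R (i : nat) : tree :=
  match i with
  | 0 | 1 => leaf
  | i'.+1 => Node [:: R i'; H i']
  end.

From mathcomp Require Import all_boot.

(* Every R_i and H_i is a binary node, and for a binary node f is the larger of
   f(left) + f(right) and the height of the lower child.  The H_i have
   f(H_i) <= 1, while R_{i+1} has two children of the same height i, so the
   second term wins at every step and f grows by exactly one. *)

Lemma sort_geq_pair (x y : nat) : sort geq [:: x; y] = [:: maxn x y; minn x y].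
Proof. by rewrite /sort /= /maxn /minn; case: ltngtP. Qed.

Lemma sorted_child_heights_pair (a b : tree) :
  sorted_child_heights [:: a; b] = [:: maxn (height a) (height b); minn (height a) (height b)].
Proof. by rewrite /sorted_child_heights /= sort_geq_pair. Qed.

Lemma height_pair (a b : tree) :
  height (Node [:: a; b]) = (maxn (height a) (height b)).+1.
Proof. by rewrite /= maxn0. Qed.

Lemma f_pair (a b : tree) :
  f (Node [:: a; b]) = maxn (f a + f b) (minn (height a) (height b)).
Proof. by rewrite /= sorted_child_heights_pair /= !addn0. Qed.

Lemma H_node (i : nat) : H i.+2 = Node [:: leaf; H i.+1].
Proof. by []. Qed.

Lemma R_node (i : nat) : R i.+2 = Node [:: R i.+1; H i.+1].
Proof. by []. Qed.

Lemma height_H (i : nat) : height (H i.+1) = i.+1.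
Proof.
elim: i => [//|i IH].
by rewrite H_node height_pair IH; case: i {IH}.
Qed.

Lemma height_R (i : nat) : height (R i.+1) = i.+1.
Proof.
elim: i => [//|i IH].
by rewrite R_node height_pair IH height_H maxnn.
Qed.

Lemma f_H_le1 (i : nat) : f (H i) <= 1.
Proof.
elim: i => [|[|i] IH] //.
by rewrite H_node f_pair geq_max geq_minl IH.
Qed.

Theorem lemma4 (i : nat) : 1 <= i -> f (R i) = i - 1.
Proof.
case: i => [//|i] _; rewrite subSS subn0.
elim: i => [//|i IH].
rewrite R_node f_pair IH height_R height_H minnn.
by apply/maxn_idPr; rewrite -addn1 leq_add2l f_H_le1.
Qed.
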